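(* For every $n\ge1$, if $T\in\mathcal{T}_n$ satisfies $\mathcal{C}(T)=c_n$, then $\mathcal{S}(T)=\min\{\mathcal{S}(T'):T'\in\mathcal{T}_n\}$.
   Context: Bifurcating trees: rooted trees in which every internal node has exactly two children, considered up to isomorphism; $\mathcal{T}_n$ is the set of such trees with $n$ leaves. For a node $w$, $\kappa_T(w)$ is its number of descendant leaves. The Colless index is $\mathcal{C}(T)=\sum_{v}|\kappa_T(v_1)-\kappa_T(v_2)|$, summed over internal nodes $v$ with children $v_1,v_2$; $c_n=\min\{\mathcal{C}(T):T\in\mathcal{T}_n\}$. The Sackin index is $\mathcal{S}(T)=\sum_{x}\delta_T(x)$, the sum over leaves $x$ of their depth (number of edges from the root), equivalently $\sum_{v}\kappa_T(v)$ over internal nodes $v$. *)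

From mathcomp Require Import all_boot.
Set Implicit Arguments. Unset Strict Implicit. Unset Printing Implicit Defensive.

(* Rooted bifurcating trees: every internal node has exactly two children.
   Represented as (ordered) binary trees; Colless and Sackin indices are
   invariant under swapping children, so minima over T_n are unaffected. *)
Inductive btree : Type :=
| Leaf : btree
| Node : btree -> btree -> btree.

Fixpoint leaves (t : btree) : nat :=
  match t with
  | Leaf => 1
  | Node l r => leaves l + leaves r
  end.

Definition absdiff (a b : nat) : nat := (a - b) + (b - a).

Fixpoint colless (t : btree) : nat :=
  match t with
  | Leaf => 0
  | Node l r => absdiff (leaves l) (leaves r) + colless l + colless r
  end.

Fixpoint sackin (t : btree) : nat :=
  match t with
  | Leaf => 0
  | Node l r => leaves l + leaves r + sackin l + sackin r
  end.

From mathcomp Require Import all_boot zify.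

(* Let c n be defined by the recursion c 0 = c 1 = 0 and
   c n = c (n %/ 2) + c (n - n %/ 2) + (n mod 2) for n >= 2.
   1. Splitting a + b leaves into a and b costs at least c (a + b):
      c (a + b) <= |a - b| + c a + c b  (cmin_split_le).  By induction on the
      tree, c (leaves T) <= colless T, and the maximally balanced tree attains
      it, so c n is the minimal Colless index c_n.
   2. Equality in 1. with a, b > 0 forces a and b into a common dyadic range
      [2^k, 2^(k+1)]  (cmin_split_eq).
   3. For every k, every tree satisfies  n (k + 2) <= S(T) + 2^(k+1).
      Call (k, n, S) tight when n lies in [2^k, 2^(k+1)] and equality holds.
   4. In a Colless-minimal tree every subtree is Colless-minimal and every
      split is an equality case of 1., so by 2. and induction the tree is
      tight for some k; the bound 3. for that k then shows that no tree with
      n leaves has a smaller Sackin index. *)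

(* The recursion defining c n, run with explicit fuel (halving is not
   structural); enough fuel makes the value independent of the fuel. *)
Fixpoint cmin_fuel (fuel n : nat) : nat :=
  if fuel is f.+1 then
    if n <= 1 then 0 else cmin_fuel f n./2 + cmin_fuel f (uphalf n) + odd n
  else 0.

Lemma cmin_fuel_enough f g n :
  n <= f -> n <= g -> cmin_fuel f n = cmin_fuel g n.
Proof.
elim: f g n => [|f IH] [|g] n //= le_nf le_ng; try by have -> : n = 0 by lia.
case: ifP => // /negbT n_gt1.
by rewrite (IH g n./2) ?(IH g (uphalf n)) //; lia.
Qed.

(* c n, the minimal Colless index of a tree with n leaves (shown below). *)
Definition cmin (n : nat) : nat := cmin_fuel n n.

Lemma cmin_rec n :
  1 < n -> cmin n = cmin n./2 + cmin (uphalf n) + odd n.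
Proof.
rewrite /cmin; case: n => // f n_gt1 /=; rewrite leqNgt n_gt1 /=.
by rewrite (cmin_fuel_enough f (f.+1)./2) ?(cmin_fuel_enough f (uphalf f.+1)) //; lia.
Qed.

Lemma cmin0 : cmin 0 = 0. Proof. by []. Qed.
Lemma cmin1 : cmin 1 = 0. Proof. by []. Qed.

(* The recursion specialised to even and odd arguments, valid for all m;
   minn m 1 absorbs the exceptional value c 1 = 0. *)
Lemma cmin_double m : cmin (m + m) = cmin m + cmin m.
Proof.
case: (posnP m) => [-> //|m_gt0].
rewrite cmin_rec; last lia.
have -> : (m + m)./2 = m by lia.
have -> : uphalf (m + m) = m by lia.
have -> : odd (m + m) = false by rewrite addnn odd_double.
by rewrite addn0.
Qed.

Lemma cmin_double_succ m : cmin (m + m + 1) = cmin m + cmin (m + 1) + minn m 1.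
Proof.
case: (posnP m) => [-> //|m_gt0].
rewrite cmin_rec; last lia.
have -> : (m + m + 1)./2 = m by lia.
have -> : uphalf (m + m + 1) = m + 1 by lia.
have -> : odd (m + m + 1) by rewrite addn1 /= addnn odd_double.
lia.
Qed.

Lemma absdiffC a b : absdiff a b = absdiff b a.
Proof. by rewrite /absdiff addnC. Qed.

(* Step 1: a root split into a and b leaves costs at least c (a + b).
   Strong induction on a + b, after halving both parts. *)
Lemma cmin_split_le a b : cmin (a + b) <= absdiff a b + cmin a + cmin b.
Proof.
have [n] := ubnP (a + b); elim: n a b => // n IH a b lt_ab_n.
(* By symmetry, if exactly one part is odd then it is b. *)
wlog par_ab : a b lt_ab_n / odd a ==> odd b.
  move=> W; case/boolP: (odd a ==> odd b) => [|par_ba]; first exact: W.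
  rewrite addnC absdiffC addnAC; apply: W; first by rewrite addnC.
  by move: par_ba; case: (odd a); case: (odd b).
have succ_le m : 0 < m -> m + 1 < n -> cmin (m + 1) <= m.-1 + cmin m.
  by move=> m_gt0 /IH; rewrite cmin1 /absdiff; lia.
have [x [y [pa [pb [Ea Eb par]]]]] : exists x y (pa pb : bool),
    [/\ a = x + x + pa, b = y + y + pb & pa ==> pb].
  by exists a./2, b./2, (odd a), (odd b); split => //; lia.
subst a b; case: pa pb par lt_ab_n {par_ab} => [] [] //= _ lt_n.
-
  rewrite (_ : _ + _ = (x + y + 1) + (x + y + 1)); last by lia.
  rewrite !cmin_double !cmin_double_succ.
  case: (posnP x) => [->|x_gt0]; case: (posnP y) => [->|y_gt0] //;
    rewrite ?add0n ?addn0 ?cmin0 ?cmin1 /absdiff.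
  + by have := succ_le y y_gt0 ltac:(lia); lia.
  + by have := succ_le x x_gt0 ltac:(lia); lia.
  + have := IH (x + 1) y ltac:(lia); have := IH x (y + 1) ltac:(lia).
    by rewrite (addnAC x 1 y) (addnA x y 1) /absdiff; lia.
-
  rewrite addn0 (_ : _ + _ = (x + y) + (x + y) + 1); last by lia.
  rewrite cmin_double !cmin_double_succ.
  case: (posnP y) => [->|y_gt0].
  + case: (posnP x) => [->|x_gt0] //; rewrite ?add0n ?addn0 ?cmin0 ?cmin1 /absdiff.
    by have := succ_le x x_gt0 ltac:(lia); lia.
  + have := IH x y ltac:(lia); have := IH x (y + 1) ltac:(lia).
    by rewrite (addnA x y 1) /absdiff; lia.
-
  rewrite !addn0 (_ : _ + _ = (x + y) + (x + y)); last by lia.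
  rewrite !cmin_double; case: (posnP (x + y)) => [|xy_gt0].
    by move/eqP; rewrite addn_eq0 => /andP[/eqP-> /eqP->].
  by have := IH x y ltac:(lia); rewrite /absdiff; lia.
Qed.

Definition dyadic (k n : nat) : bool := 2 ^ k <= n <= 2 ^ k.+1.

Lemma dyadicS k n : dyadic k n -> dyadic k.+1 (n + n).
Proof. by rewrite /dyadic !expnS; lia. Qed.

Lemma dyadic_exists n : 0 < n -> exists k, dyadic k n.
Proof.
move=> n_gt0; have /andP[lo hi] := @trunc_log_bounds 2 n erefl n_gt0.
by exists (trunc_log 2 n); rewrite /dyadic lo ltnW.
Qed.

Lemma cmin_split_odd_lt x y : y < x ->
  cmin ((x + x + 1) + (y + y + 1)) <
    absdiff (x + x + 1) (y + y + 1) + cmin (x + x + 1) + cmin (y + y + 1).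
Proof.
move=> lt_yx; rewrite (_ : _ + _ = (x + y + 1) + (x + y + 1)); last by lia.
rewrite !cmin_double !cmin_double_succ /absdiff.
case: (posnP y) => [->|y_gt0].
  by have := cmin_split_le x 1; rewrite cmin1 /absdiff !addn0; lia.
have := cmin_split_le (x + 1) y; have := cmin_split_le x (y + 1).
by rewrite (addnAC x 1 y) (addnA x y 1) /absdiff; lia.
Qed.

(* Step 2 (ordered form): in an equality case of cmin_split_le, both parts
   lie in a common dyadic range; the halves are again an equality case. *)
Lemma cmin_split_eq_ord a b : 0 < b <= a ->
  cmin (a + b) = absdiff a b + cmin a + cmin b -> exists k, dyadic k a && dyadic k b.
Proof.
have [n] := ubnP (a + b); elim: n a b => // n IH a b lt_ab_n /andP[b_gt0 le_ba] E.
have [<-|neq_ab] := eqVneq a b.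
  by have [k k_a] := dyadic_exists a (leq_trans b_gt0 le_ba); exists k; rewrite k_a.
have split_le := cmin_split_le; rewrite /absdiff in split_le E.
have [x [y [pa [pb [Ea Eb]]]]] : exists x y (pa pb : bool), a = x + x + pa /\ b = y + y + pb.
  by exists a./2, b./2, (odd a), (odd b); split; lia.
subst a b; case: pa pb E lt_ab_n le_ba neq_ab b_gt0 => [] [] /= E lt_n le_ba neq_ab b_gt0.
-
  by have := cmin_split_odd_lt x y ltac:(lia); rewrite /absdiff; lia.
-
  move: E; rewrite addn0 (_ : _ + _ = (x + y) + (x + y) + 1); last by lia.
  rewrite !cmin_double !cmin_double_succ => E.
  have := split_le x y; have := split_le (x + 1) y; rewrite (addnAC x 1 y) => le1 le2.
  have [|||k /andP[]] := IH (x + 1) y _ _ _; try lia.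
    by rewrite /absdiff (addnAC x 1 y); lia.
  by exists k.+1; move: a b; rewrite /dyadic !expnS; lia.
-
  move: E; rewrite addn0 (_ : _ + _ = (x + y) + (x + y) + 1); last by lia.
  rewrite !cmin_double !cmin_double_succ => E.
  case: (posnP y) => [y0|y_gt0].
    subst y; move: E; rewrite ?add0n ?addn0 ?cmin0 ?cmin1 => E.
    have := split_le x 1; rewrite cmin1 => le1.
    have x1 : x = 1 by lia.
    by subst x; exists 0.
  have := split_le x y; have := split_le x (y + 1); rewrite (addnA x y 1) => le1 le2.
  have [|||k /andP[]] := IH x y _ _ _; try lia.
    by rewrite /absdiff; lia.
  by exists k.+1; move: a b; rewrite /dyadic !expnS; lia.
-
  move: E; rewrite !addn0 (_ : _ + _ = (x + y) + (x + y)); last by lia.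
  rewrite !cmin_double => E; have := split_le x y => le1.
  have [|||k /andP[]] := IH x y _ _ _; try lia.
    by rewrite /absdiff; lia.
  by move=> /dyadicS kx /dyadicS ky; exists k.+1; rewrite kx ky.
Qed.

Lemma cmin_split_eq a b : 0 < a -> 0 < b ->
  cmin (a + b) = absdiff a b + cmin a + cmin b -> exists k, dyadic k a && dyadic k b.
Proof.
move=> a_gt0 b_gt0 E; case: (leqP b a) => [le_ba | /ltnW le_ab].
  by apply: cmin_split_eq_ord; rewrite // b_gt0.
have [||k /andP[k_b k_a]] := cmin_split_eq_ord b a; first by rewrite a_gt0.
  by rewrite addnC absdiffC addnAC.
by exists k; rewrite k_a k_b.
Qed.

Lemma leaves_gt0 t : 0 < leaves t.
Proof. by elim: t => //= l IHl r IHr; rewrite addn_gt0 IHl. Qed.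

Lemma cmin_le_colless t : cmin (leaves t) <= colless t.
Proof.
elim: t => //= l IHl r IHr.
by have := cmin_split_le (leaves l) (leaves r); lia.
Qed.

(* ... and it is attained (by the maximally balanced tree), so c n = c_n. *)
Lemma cmin_attained n : 0 < n -> exists t, leaves t = n /\ colless t = cmin n.
Proof.
have [m] := ubnP n; elim: m n => // m IH n lt_nm n_gt0.
have [x [En | En]] : exists x, n = x + x \/ n = x + x + 1 by exists n./2; lia.
- subst n; have [t [leaves_t colless_t]] := IH x ltac:(lia) ltac:(lia).
  by exists (Node t t); rewrite /= leaves_t colless_t cmin_double /absdiff subnn.
- subst n; case: (posnP x) => [-> | x_gt0]; first by exists Leaf.
  have [t [leaves_t colless_t]] := IH x ltac:(lia) ltac:(lia).
  have [u [leaves_u colless_u]] := IH (x + 1) ltac:(lia) ltac:(lia).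
  exists (Node u t); rewrite /= leaves_t leaves_u colless_t colless_u cmin_double_succ.
  by rewrite /absdiff; lia.
Qed.

Lemma colless_min_node l r :
  colless (Node l r) = cmin (leaves (Node l r)) ->
  [/\ colless l = cmin (leaves l), colless r = cmin (leaves r) &
      cmin (leaves l + leaves r) =
        absdiff (leaves l) (leaves r) + cmin (leaves l) + cmin (leaves r)].
Proof.
move=> /= colless_lr.
have := cmin_le_colless l; have := cmin_le_colless r.
by have := cmin_split_le (leaves l) (leaves r); split; lia.
Qed.

Lemma sackin_lower_bound k t : leaves t * (k + 2) <= sackin t + 2 ^ k.+1.
Proof.
elim: t k => [|l IHl r IHr] k /=.
  by rewrite mul1n expnS; have := ltn_expl k (ltnSn 1); lia.
have := leaves_gt0 l; have := leaves_gt0 r.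
case: k => [|k]; first by have := IHl 0; have := IHr 0; lia.
by have := IHl k; have := IHr k; rewrite (expnS 2 k.+1); lia.
Qed.

Definition sackin_tight (k n s : nat) : Prop :=
  dyadic k n /\ s + 2 ^ k.+1 = n * (k + 2).

Lemma dyadic_overlap j k n :
  dyadic j n -> dyadic k n -> j < k -> k = j.+1 /\ n = 2 ^ k.
Proof.
rewrite /dyadic => /andP[_ le_n_j] /andP[le_k_n _] lt_jk.
have le_kj : k <= j.+1 by rewrite -(@leq_exp2l 2) //; exact: leq_trans le_k_n le_n_j.
have ek : k = j.+1 by apply/eqP; rewrite eqn_leq le_kj lt_jk.
by subst k; split => //; apply/eqP; rewrite eqn_leq le_n_j le_k_n.
Qed.

Lemma sackin_tight_reindex j k n s :
  sackin_tight j n s -> dyadic k n -> sackin_tight k n s.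
Proof.
move=> [jn E] kn; split => //.
have [lt_jk | lt_kj | <- //] := ltngtP j k.
- have [ek en] := dyadic_overlap j k n jn kn lt_jk; subst k n.
  by move: E; rewrite !expnS; nia.
- have [ej en] := dyadic_overlap k j n kn jn lt_kj; subst j n.
  by move: E; rewrite !expnS; nia.
Qed.

Lemma sackin_tight_node k a b sa sb :
  sackin_tight k a sa -> sackin_tight k b sb ->
  sackin_tight k.+1 (a + b) (a + b + sa + sb).
Proof.
rewrite /sackin_tight /dyadic !expnS => -[/andP[a_lo a_hi] Ea] [/andP[b_lo b_hi] Eb].
by split; [apply/andP; split|]; nia.
Qed.

Lemma colless_min_sackin_tight t :
  colless t = cmin (leaves t) -> exists k, sackin_tight k (leaves t) (sackin t).
Proof.
elim: t => [_|l IHl r IHr /colless_min_node[min_l min_r split_eq]].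
  by exists 0.
have [kl tight_l] := IHl min_l; have [kr tight_r] := IHr min_r.
have [k /andP[dy_l dy_r]] := cmin_split_eq _ _ (leaves_gt0 l) (leaves_gt0 r) split_eq.
exists k.+1; apply: sackin_tight_node.
- exact: sackin_tight_reindex tight_l dy_l.
- exact: sackin_tight_reindex tight_r dy_r.
Qed.

Theorem proposition9 (n : nat) (T : btree) :
  1 <= n ->
  leaves T = n ->
  (forall T' : btree, leaves T' = n -> colless T <= colless T') ->
  forall T' : btree, leaves T' = n -> sackin T <= sackin T'.
Proof.
move=> n_gt0 leaves_T T_min T' leaves_T'.
have [T0 [leaves_T0 colless_T0]] := cmin_attained n n_gt0.
have colless_T : colless T = cmin (leaves T).
  by apply/eqP; rewrite eqn_leq cmin_le_colless leaves_T -colless_T0 T_min.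
have [k [_ sackin_T]] := colless_min_sackin_tight T colless_T.
by have := sackin_lower_bound k T'; rewrite leaves_T' -leaves_T; lia.
Qed.
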